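(* Let $(X,\Sigma)$ be a measurable space and $p$ a transition function on it with associated operator $A$. Suppose $A$ has a disjoint countably additive cycle of measures $K=\{\mu_1,\dots,\mu_m\}\subset S_{ca}$. Then there is a system of pairwise disjoint sets $S=\{D_1,\dots,D_m\}$, $D_i\in\Sigma$, such that $\mu_i(D_j)=1$ if $i=j$ and $\mu_i(D_j)=0$ if $i\ne j$, and $p(x,D_{i+1})=1$ for $\mu_i$-almost every $x\in D_i$, $i=1,\dots,m-1$, and $p(x,D_1)=1$ for $\mu_m$-almost every $x\in D_m$ (so $S$ is a singular cycle of sets of states in the $\mu_i$-almost everywhere sense).
   Context: $X$ is an arbitrary infinite set and $\Sigma$ a $\sigma$-algebra of subsets of $X$ containing all one-point sets. $ca(X,\Sigma)$ denotes the bounded countably additive real measures on $\Sigma$ and $S_{ca}=\{\mu\in ca(X,\Sigma):\mu\ge0,\ \mu(X)=1\}$. A transition function is a map $p(x,E)$ with $0\le p(x,E)\le1$, $p(x,X)=1$, $p(\cdot,E)$ bounded $\Sigma$-measurable for every $E\in\Sigma$, and $p(x,\cdot)$ countably additive for every $x\in X$. The Markov operator is $A\mu(E)=\int_X p(x,E)\,\mu(dx)$. A cycle of measures of $A$ is a finite numbered set $\{\mu_1,\dots,\mu_m\}$ of pairwise different positive measures with $A\mu_i=\mu_{i+1}$ ($1\le i\le m-1$), $A\mu_m=\mu_1$. For positive measures, $(\mu\wedge\nu)(E)=\inf\{\mu(C)+\nu(E\setminus C):C\subset E,C\in\Sigma\}$, and $\mu,\nu$ are disjoint if $\mu\wedge\nu=0$;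 a cycle is disjoint if its measures are pairwise disjoint. *)

From HB Require Import structures.
From mathcomp Require Import all_boot all_order all_algebra.
From mathcomp Require Import all_classical all_reals all_analysis.
Set Implicit Arguments. Unset Strict Implicit. Unset Printing Implicit Defensive.
Import Order.TTheory GRing.Theory Num.Theory.
Local Open Scope classical_set_scope.
Local Open Scope ring_scope.

Definition transition_function (d : measure_display) (T : measurableType d)
  (R : realType) (p : T -> set T -> R) : Prop :=
  [/\ (forall x E, measurable E -> 0 <= p x E <= 1),
      (forall x, p x setT = 1),
      (forall E, measurable E -> measurable_fun setT (fun x => p x E)) &
      (forall x, semi_sigma_additive (fun E => (p x E)%:E))].

Definition markov_op (d : measure_display) (T : measurableType d)
  (R : realType) (p : T -> set T -> R) (mu : {measure set T -> \bar R})
  (E : set T) : \bar R :=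
  (\int[mu]_x (p x E)%:E)%E.

Definition measure_meet (d : measure_display) (T : measurableType d)
  (R : realType) (mu nu : set T -> \bar R) (E : set T) : \bar R :=
  ereal_inf [set (mu C + nu (E `\` C))%E | C in [set C | measurable C /\ C `<=` E]].

Definition measures_disjoint (d : measure_display) (T : measurableType d)
  (R : realType) (mu nu : set T -> \bar R) : Prop :=
  forall E, measurable E -> measure_meet mu nu E = 0%E.

(* A disjoint cycle of measures mu_0,...,mu_{m-1} of A (indices mod m). *)
Definition disjoint_cycle (d : measure_display) (T : measurableType d)
  (R : realType) (p : T -> set T -> R) (m : nat)
  (mu : 'I_m -> probability T R) : Prop :=
  [/\ (forall i j : 'I_m, i != j -> (mu i : set T -> \bar R) <> mu j),
      (forall i : 'I_m, forall E, measurable E -> markov_op p (mu i) E = mu (ordS i) E) &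
      (forall i j : 'I_m, i != j -> measures_disjoint (mu i) (mu j))].

(* Two disjoint finite measures are mutually singular: if P, ~` P is a Hahn
   decomposition for mu - nu, then mu (~` P) + nu P bounds from below every
   mu C + nu (~` C), hence is at most (mu /\ nu)(X) = 0.  Separating the
   measures of the cycle pairwise by such sets S i j and intersecting gives
   sets D i carrying mu i and null for every other mu j.  Finally
   \int p(x, D (i+1)) mu_i(dx) = mu_(i+1)(D (i+1)) = 1 with 0 <= p <= 1 forces
   p(x, D (i+1)) = 1 for mu_i-almost every x. *)

From HB Require Import structures.
From mathcomp Require Import all_boot all_order all_algebra.
From mathcomp Require Import all_classical all_reals all_analysis.
From mathcomp Require Import measurable_realfun.
Import Order.TTheory GRing.Theory Num.Theory.
Local Open Scope classical_set_scope.
Local Open Scope ring_scope.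

Section mutual_singularity.
Local Open Scope ereal_scope.
Context {d : measure_display} {T : measurableType d} {R : realType}.
Variables mu nu : {finite_measure set T -> \bar R}.

Lemma finite_measure_Hahn_decomposition : exists P, [/\ measurable P,
  forall A, measurable A -> nu (P `&` A) <= mu (P `&` A) &
  forall A, measurable A -> mu (~` P `&` A) <= nu (~` P `&` A)].
Proof.
pose c := cadd (charge_of_finite_measure mu) (copp (charge_of_finite_measure nu)).
have [P [N [[mP posP] [mN negN] PUN PIN]]] := Hahn_decomposition c.
have NE : N = ~` P.
  apply/seteqP; split => [x Nx Px|x nPx]; first by rewrite -[False]/(set0 x) -PIN.
  by have [/nPx|] : (P `|` N) x by rewrite PUN.
rewrite {}NE in negN.
exists P; split=> // A mA.
  have mPA := measurableI _ _ mP mA.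
  by rewrite -sube_ge0 ?fin_num_measure//; apply: posP => //; exact: subIsetl.
have mPcA : measurable (~` P `&` A) by apply: measurableI => //; exact: measurableC.
by rewrite -(@sube_le0 _ (nu _)); apply: negN => //; exact: subIsetl.
Qed.

Lemma measures_disjoint_separated : measures_disjoint mu nu ->
  exists S, [/\ measurable S, mu (~` S) = 0 & nu S = 0].
Proof.
move=> munu; have [P [mP nuP muP]] := finite_measure_Hahn_decomposition.
have mPc := measurableC mP.
have : mu (~` P) + nu P <= measure_meet mu nu setT.
  apply: le_ereal_inf_tmp => _ [C [mC _] <-]; rewrite setTD.
  have mCc := measurableC mC.
  rewrite (measureDI mu mPc mC) (measureDI nu mP mC) (measureDI mu mC mP).
  rewrite (measureDI nu mCc mP) !setDE.
  apply: le_trans (leeD (leeD (muP _ mCc) (lexx _)) (leeD (lexx _) (nuP _ mC))) _.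
  by rewrite addeACA addeC !(setIC C) !(setIC (~` C)).
rewrite (munu setT measurableT) => le0.
have /andP[/eqP muP0 /eqP nuP0] : (mu (~` P) == 0) && (nu P == 0).
  by rewrite -padde_eq0 // eq_le le0 adde_ge0.
by exists P.
Qed.

End mutual_singularity.

Section separating_sets.
Local Open Scope ereal_scope.
Context {d : measure_display} {T : measurableType d} {R : realType} {I : finType}.
Variables (mu : I -> probability T R) (S : I -> I -> set T).
Hypothesis mS : forall i j, i != j -> measurable (S i j).
Hypothesis S_null : forall i j, i != j -> mu i (~` S i j) = 0 /\ mu j (S i j) = 0.

Definition separating_set i := \big[setI/setT]_(j | j != i) (S i j `&` ~` S j i).

Lemma measurable_separating_set i : measurable (separating_set i).
Proof.
apply: bigsetI_measurable => j ji.
by apply: measurableI; [apply: mS|apply: measurableC; apply: mS]; rewrite // eq_sym.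
Qed.

Lemma separating_set_sub i j : i != j -> separating_set i `<=` S i j.
Proof. by move=> ij x; rewrite /separating_set (bigD1 j) 1?eq_sym //= => -[[]]. Qed.

Lemma separating_set_subC i j : i != j -> separating_set j `<=` ~` S i j.
Proof. by move=> ij x; rewrite /separating_set (bigD1 i) //= => -[[_]]. Qed.

Lemma separating_setsI i j : i != j -> separating_set i `&` separating_set j = set0.
Proof.
move=> ij; apply/seteqP; split => // x [].
by move=> /(separating_set_sub _ _ ij) Sx /(separating_set_subC _ _ ij).
Qed.

Lemma separating_set_measure i j :
  mu i (separating_set j) = (if i == j then 1 else 0).
Proof.
have [<-|ij] := eqVneq i j; last first.
  apply/eqP; rewrite eq_le measure_ge0 andbT -(S_null _ _ ij).1 le_measure ?inE //.
  - exact: measurable_separating_set.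
  - by apply: measurableC; exact: mS.
  - exact: separating_set_subC.
have mDc := measurableC (measurable_separating_set i).
rewrite -(setCK (separating_set i)) probability_setC //.
suff -> : mu i (~` separating_set i) = 0 by rewrite sube0.
apply: measure_negligible => //; rewrite setC_bigsetI.
elim/big_ind: _ => [|A B|k ki]; [exact: negligible_set0|exact: negligibleU|].
have [_ Ski0] := S_null _ _ ki; rewrite eq_sym in ki.
have [Sik0 _] := S_null _ _ ki.
rewrite setCI setCK; apply: negligibleU; apply/negligibleP => //.
- by apply: measurableC; exact: mS.
- by apply: mS; rewrite eq_sym.
Qed.

End separating_sets.

Lemma separating_sets_of_pairwise_separated {d : measure_display} {T : measurableType d}
    {R : realType} {I : finType} (mu : I -> probability T R) :
  (forall i j, i != j -> exists S, [/\ measurable S, mu i (~` S) = 0%E & mu j S = 0%E]) ->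
  exists D : I -> set T,
    [/\ (forall i, measurable (D i)),
        (forall i j, i != j -> D i `&` D j = set0) &
        (forall i j, mu i (D j) = (if i == j then 1 else 0)%E)].
Proof.
move=> separated.
have /choice[S hS] : forall ij : I * I, exists S, ij.1 != ij.2 ->
    [/\ measurable S, mu ij.1 (~` S) = 0%E & mu ij.2 S = 0%E].
  move=> [i j]; have [/separated[S hS]|_] := boolP (i != j); first by exists S.
  by exists set0.
have mS i j : i != j -> measurable (S (i, j)) by case/(hS (i, j)).
have S_null i j : i != j -> mu i (~` S (i, j)) = 0%E /\ mu j (S (i, j)) = 0%E.
  by case/(hS (i, j)).
exists (separating_set (fun i j => S (i, j))); split.
- exact: measurable_separating_set.
- exact: separating_setsI.
- exact: separating_set_measure.
Qed.

Section markov_operator.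
Local Open Scope ereal_scope.
Context {d : measure_display} {T : measurableType d} {R : realType}.
Context {p : T -> set T -> R}.
Hypothesis hp : transition_function p.

Lemma markov_op_eq1_ae (mu : probability T R) F : measurable F ->
  markov_op p mu F = 1 -> {ae mu, forall x, p x F = 1%R}.
Proof.
case: hp => p01 _ mp _ mF muF1.
have pF01 x : (0 <= p x F <= 1)%R := p01 x F mF.
have pF_ge0 x : 0 <= (p x F)%:E by rewrite lee_fin; case/andP: (pF01 x).
have qF_ge0 x : 0 <= (1 - p x F)%:E by rewrite lee_fin subr_ge0; case/andP: (pF01 x).
have mq : measurable_fun setT (@EFin R \o (fun x => 1 - p x F)%R).
  by apply/measurable_EFinP; apply: measurable_funB => //; exact: mp.
have int_q0 : \int[mu]_x (1 - p x F)%:E = 0.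
  have : \int[mu]_x ((1 - p x F)%:E + (p x F)%:E) = 1.
    under eq_integral do rewrite -EFinD subrK.
    by rewrite integral_cst // mul1e; exact: probability_setT.
  rewrite ge0_integralD //; last by apply/measurable_EFinP; exact: mp.
  rewrite -/(markov_op p mu F) muF1 => /(congr1 (fun y => y - 1)).
  by rewrite addeK // subee.
have : \int[mu]_x `|(1 - p x F)%:E| = 0.
  by rewrite -int_q0; apply: eq_integral => x _; rewrite gee0_abs.
move/(ae_eq_integral_abs _ measurableT mq); apply: filterS => x /(_ I) /=.
by move=> [] /eqP; rewrite subr_eq0 => /eqP.
Qed.

End markov_operator.

Theorem theorem4p6 (d : measure_display) (T : measurableType d) (R : realType)
  (hinf : infinite_set [set: T]) (hsing : forall x : T, measurable [set x])
  (p : T -> set T -> R) (hp : transition_function p)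
  (m : nat) (mu : 'I_m -> probability T R) (hcyc : disjoint_cycle p mu) :
  exists D : 'I_m -> set T,
    [/\ (forall i, measurable (D i)),
        (forall i j, i != j -> D i `&` D j = set0),
        (forall i j, mu i (D j) = (if i == j then 1 else 0)%E) &
        (forall i, {ae mu i, forall x, D i x -> p x (D (ordS i)) = 1})].
Proof.
case: hcyc => _ markov_cycle disjoint_mu.
have [D [mD DI muD]] := separating_sets_of_pairwise_separated mu
  (fun i j ij => measures_disjoint_separated _ _ (disjoint_mu i j ij)).
exists D; split => // i.
have : markov_op p (mu i) (D (ordS i)) = 1%E by rewrite markov_cycle // muD eqxx.
by move/(markov_op_eq1_ae hp _ _ (mD _)); apply: filterS => x + _.
Qed.
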